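(* Let $p$ be a prime, $m\ge1$, $s\ge0$ integers, $R^4=\mathbb{F}_{p^m}[u]/\langle u^4\rangle$, $f(x)\in\mathbb{F}_{p^m}[x]$ irreducible, $\omega(x)=f(x)^{p^s}$, $R^{4,\omega}=R^4[x]/\langle\omega(x)\rangle$ and $R^{1,\omega}=\mathbb{F}_{p^m}[x]/\langle\omega(x)\rangle$. Let $a,t$ be integers with $0\le t<a\le p^s-1$, and let $h(x)\in R^{1,\omega}$ be either $0$ or a unit of $R^{1,\omega}$. Let $L$ be the smallest non-negative integer such that $u^3f(x)^L\in\langle u^2f(x)^a+u^3f(x)^t h(x)\rangle$ (ideal of $R^{4,\omega}$). Then $$L=\begin{cases} a & \text{if } h(x)=0,\\ \min\{a,\ p^s-a+t\} & \text{if } h(x)\ne0.\end{cases}$$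
   Context: $R^{1,\omega}$ is identified with the subring of $R^{4,\omega}$ consisting of classes of polynomials over $\mathbb{F}_{p^m}$ (no $u$). *)

From HB Require Import structures.
From mathcomp Require Import all_boot all_order all_algebra.
Set Implicit Arguments. Unset Strict Implicit. Unset Printing Implicit Defensive.
Import GRing.Theory.
Local Open Scope ring_scope.

(* R^{1,w} = F[x]/<w(x)>, and R^{4,w} = (F[u]/<u^4>)[x]/<w(x)>
   which we represent through lifts: an element of R^{4,w} is represented by
   a polynomial in {poly {poly F}}, where the OUTER variable 'X is u and the
   coefficients are polynomials in x.  R^{4,w} is the quotient of this ring
   by the ideal <u^4, w(x)>. *)

Definition in_R4w_ideal (F : fieldType) (w : {poly F}) (g y : {poly {poly F}}) : Prop :=
  exists r q1 q2 : {poly {poly F}}, y = r * g + q1 * 'X^4 + q2 * w%:P.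

Definition R1w_zero (F : fieldType) (w h : {poly F}) : bool := w %| h.

Definition R1w_unit (F : fieldType) (w h : {poly F}) : Prop :=
  exists k : {poly F}, w %| h * k - 1.

From HB Require Import structures.
From mathcomp Require Import all_boot all_order all_algebra.
From mathcomp Require Import ring.
Import GRing.Theory.
Local Open Scope ring_scope.

(* Write w = e f^a with e = f^(p^s - a) and g = u^2 f^a + u^3 f^t h.  The
   element u g = u^3 f^a (mod u^4) always lies in <g>; when h k = 1 mod w,
   so does e k g = u^3 e f^t (mod w).  Conversely, if u^3 c = r g modulo
   <u^4, w>, the u^2-coefficient gives r_0 f^a = 0 mod w, i.e. e | r_0, and
   then the u^3-coefficient c = r_1 f^a + r_0 f^t h (mod w) is divisible by
   f^a and by e f^t h, hence by f^L (if w | h, then w | e f^t h). *)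

Section PrincipalIdealR4w.

Variable F : fieldType.
Implicit Types w e A B c d h : {poly F}.

Lemma in_R4w_idealE w A B c :
  in_R4w_ideal w ('X^2 * A%:P + 'X^3 * B%:P) ('X^3 * c%:P) ->
  exists r0 r1 q2 q3 : {poly F},
    r0 * A + q2 * w = 0 /\ c = r1 * A + r0 * B + q3 * w.
Proof.
move=> [r [q1 [q2 E]]]; exists r`_0, r`_1, q2`_2, q2`_3.
have coefE k : (r * ('X^2 * A%:P + 'X^3 * B%:P) + q1 * 'X^4 + q2 * w%:P)`_k
    = (r * 'X^2)`_k * A + (r * 'X^3)`_k * B + (q1 * 'X^4)`_k + q2`_k * w.
  by rewrite mulrDr !mulrA !coefD !coefMC.
split.
- have := congr1 (fun y : {poly {poly F}} => y`_2) E.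
  by rewrite /= coefE coefMC !coefMXn coefXn /= !(mul0r, add0r, addr0) => <-.
- have := congr1 (fun y : {poly {poly F}} => y`_3) E.
  by rewrite /= coefE coefMC !coefMXn coefXn /= mul1r addr0.
Qed.

Lemma in_R4w_ideal_lead w A B :
  in_R4w_ideal w ('X^2 * A%:P + 'X^3 * B%:P) ('X^3 * A%:P).
Proof. by exists 'X, (- B%:P), 0; ring. Qed.

Lemma in_R4w_ideal_unit e A B h :
  R1w_unit (e * A) h ->
  in_R4w_ideal (e * A) ('X^2 * A%:P + 'X^3 * (B * h)%:P) ('X^3 * (e * B)%:P).
Proof.
move=> [k /dvdpP [c /eqP]]; rewrite subr_eq => /eqP hk.
have hkP : h%:P * k%:P = c%:P * (e%:P * A%:P) + 1 by rewrite -!polyCM hk polyCD.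
exists (e * k)%:P, 0, (- ('X^2 * k%:P + 'X^3 * (e * B * c)%:P)); rewrite !polyCM.
transitivity ('X^3 * (e%:P * B%:P) * (h%:P * k%:P - c%:P * (e%:P * A%:P))).
  by rewrite hkP addrAC subrr add0r mulr1.
ring.
Qed.

Lemma dvdp_in_R4w_ideal e A B c d :
  A != 0 -> d %| A -> d %| e * B ->
  in_R4w_ideal (e * A) ('X^2 * A%:P + 'X^3 * B%:P) ('X^3 * c%:P) -> d %| c.
Proof.
move=> A0 dA deB /in_R4w_idealE [r0 [r1 [q2 [q3 [E2 ->]]]]].
have -> : r0 = - (q2 * e).
  by apply: (mulIf A0); rewrite mulNr -mulrA; apply/eqP; rewrite -addr_eq0 E2.
rewrite mulNr -mulrA; apply: dvdp_add; first apply: dvdp_add.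
- exact: dvdp_mull.
- by rewrite dvdpNr; apply: dvdp_mull.
- by apply: dvdp_mull; apply: dvdp_mull.
Qed.

End PrincipalIdealR4w.

Theorem proposition4p1 (p m s : nat) (F : finFieldType) (f h : {poly F}) (a t : nat) :
  prime p -> (0 < m)%N -> #|F| = (p ^ m)%N ->
  irreducible_poly f ->
  (t < a)%N -> (a <= p ^ s - 1)%N ->
  (R1w_zero (f ^+ (p ^ s)) h \/ R1w_unit (f ^+ (p ^ s)) h) ->
  let w := f ^+ (p ^ s) in
  let g : {poly {poly F}} := 'X^2 * (f ^+ a)%:P + 'X^3 * (f ^+ t * h)%:P in
  let L := if R1w_zero w h then a else minn a (p ^ s - a + t) in
  in_R4w_ideal w g ('X^3 * (f ^+ L)%:P) /\
  (forall n : nat, (n < L)%N -> ~ in_R4w_ideal w g ('X^3 * (f ^+ n)%:P)).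
Proof.
move=> _ _ _ [f_gt1 _] _ a_le hw w g L.
have a_le_ps : (a <= p ^ s)%N by rewrite (leq_trans a_le) ?leq_subr.
have wE : w = f ^+ (p ^ s - a) * f ^+ a by rewrite -exprD subnK.
have efthE : f ^+ (p ^ s - a) * (f ^+ t * h) = f ^+ (p ^ s - a + t) * h.
  by rewrite exprD mulrA.
have L_le_a : (L <= a)%N by rewrite /L; case: ifP => // _; apply: geq_minl.
have f_neq0 : f != 0 by rewrite -size_poly_gt0 (ltn_trans _ f_gt1).
split.
- rewrite /L /g; case: ifP => [_ | hw0]; first exact: in_R4w_ideal_lead.
  have [_ | _] := leqP a (p ^ s - a + t); first exact: in_R4w_ideal_lead.
  rewrite exprD wE; apply: in_R4w_ideal_unit.
  by rewrite -wE; case: hw; rewrite ?hw0.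
- move=> n; rewrite ltnNge -(dvdp_Pexp2l _ _ f_gt1) => /negP + in_g; apply.
  move: in_g; rewrite /g wE; apply: dvdp_in_R4w_ideal.
  + by rewrite expf_neq0.
  + exact: dvdp_exp2l.
  + rewrite efthE /L; case: ifP => [hw0 | _].
      by apply: dvdp_mull; apply: dvdp_trans hw0; apply: dvdp_exp2l.
    by apply: dvdp_mulr; apply: dvdp_exp2l; apply: geq_minr.
Qed.
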